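(* For each $n\ge1$ let $\mathrm T_n=(T_n,\mathrm D_n)$ be a random labeled multitype plane tree with valid law $\nu_n$, and let $\mathrm T_n^{\mathrm{sym}}=(T_n^{\mathrm{sym}},\mathrm D_n^{\mathrm{sym}})$ have law $\nu_n^{\mathrm{sym}}$. Fix a type $q\in S$. If there exists a $C([0,1],\mathbb R)$-valued random process $\Lambda^{(q)}$ such that $|V(T_n^{\mathrm{sym}})|^{-1}\Lambda^{(q)}_{T_n^{\mathrm{sym}}}\to\Lambda^{(q)}$ in distribution, then also $|V(T_n)|^{-1}\Lambda^{(q)}_{T_n}\to\Lambda^{(q)}$ in distribution.
   Context: Plane trees are rooted, encoded by Ulam–Harris words, with vertex types $s(v)$ in a countable set $S$; a labeled tree $(t,\mathrm d)$ has real displacements on edges. $P_t$ is the set of vectors of permutations of the children of each vertex; $\sigma(t,\mathrm d)$ reorders children accordingly with displacements following edges; the symmetrization of a random labeled tree is $\sigma(T,\mathrm D)$ with $\sigma$ uniform on $P_T$ given the tree, and $\nu^{\mathrm{sym}}$ is its law. A law $\nu$ is valid if (i) the law of the unlabeled tree is invariant under all $\sigma\in P_t$, (ii) the child-displacement vectors $D_v=(D_{v,v1},\dots,D_{v,vk(v)})$ are conditionally independent given $T$, (iii) the conditional law of $D_v$ depends only on the type of $v$ and the types of its children. The contour exploration $\theta:\{0,\dots,2|t|-2\}\to V(t)$ is the depth-first walk ($\theta(0)=\emptyset$; $\theta(i)$ is the lexicographically first unvisited child of $\theta(i-1)$, else its parent). For a tree $t$ with $n=|V(t)|$ vertices and $q\in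 S$, $\Lambda^{(q)}_t(i/(2n-2))=|\{0\le j<i: s(\theta(j))=q\}|$ for $0\le i\le 2n-2$, extended to $[0,1]$ by linear interpolation. Convergence in distribution is in $C([0,1],\mathbb R)$ with the uniform topology. *)

From HB Require Import structures.
From mathcomp Require Import all_boot all_order all_algebra all_fingroup.
From mathcomp Require Import all_classical all_reals all_analysis.
Set Implicit Arguments. Unset Strict Implicit. Unset Printing Implicit Defensive.
Import Order.TTheory GRing.Theory Num.Theory numFieldNormedType.Exports.
Local Open Scope classical_set_scope.
Local Open Scope ring_scope.

(* Plane trees with vertex types in S and edge labels in L.           *)
(* A node carries its type and the ordered list of its children, each *)
(* child together with the label (displacement) of the edge to it.    *)
(* Unlabeled trees: L = unit.  Labeled trees: L = R.                  *)
(* Vertices are Ulam-Harris words (root-to-vertex child indices).     *)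
Inductive ptree (S L : Type) : Type :=
  PNode : S -> seq (L * ptree S L) -> ptree S L.
Arguments PNode {S L}.

Section Trees.
Variables (S L : Type).

Definition root_type (t : ptree S L) : S := let: PNode s _ := t in s.

(* Ulam-Harris words of the vertices, root = [::], child i of v = v ++ [:: i] *)
Fixpoint vertices (t : ptree S L) : seq (seq nat) :=
  let: PNode _ cs := t in
  [::] :: (fix vs (i : nat) (cs : seq (L * ptree S L)) : seq (seq nat) :=
             match cs with
             | [::] => [::]
             | c :: cs' => [seq i :: w | w <- vertices c.2] ++ vs i.+1 cs'
             end) 0%N cs.

Definition nverts (t : ptree S L) : nat := size (vertices t).

Fixpoint subt (t : ptree S L) (w : seq nat) : option (ptree S L) :=
  match w with
  | [::] => Some t
  | i :: w' => let: PNode _ cs := t in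
               match drop i cs with
               | c :: _ => subt c.2 w'
               | [::] => None
               end
  end.

Definition kids (t : ptree S L) (v : seq nat) : nat :=
  if subt t v is Some (PNode _ cs) then size cs else 0%N.

Definition typ (t : ptree S L) (v : seq nat) : option S :=
  omap root_type (subt t v).

Definition child_types (t : ptree S L) (v : seq nat) : seq S :=
  if subt t v is Some (PNode _ cs) then [seq root_type c.2 | c <- cs] else [::].

(* contour exploration: list of types s(theta(0)), ..., s(theta(2n-2)) *)
Fixpoint contour (t : ptree S L) : seq S :=
  let: PNode s cs := t in
  s :: (fix cl (cs : seq (L * ptree S L)) : seq S :=
          match cs with
          | [::] => [::]
          | c :: cs' => contour c.2 ++ s :: cl cs'
          end) cs.

Definition all_choices (A : Type) (ls : seq (seq A)) : seq (seq A) :=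
  foldr (fun l acc => [seq x :: r | x <- l, r <- acc]) [:: [::]] ls.

Definition permute (A : Type) (k : nat) (p : {perm 'I_k}) (ys : seq A) : seq A :=
  if ys is y0 :: _ then [seq nth y0 ys (p i) | i <- enum 'I_k] else [::].

(* The list (with multiplicity) of all sigma(t) for sigma in P_t:        *)
(* one permutation of the children at each vertex, the edge labels       *)
(* following their edges.  Its size is |P_t| = prod_v k(v)!.            *)
Fixpoint sym_list (t : ptree S L) : seq (ptree S L) :=
  let: PNode s cs := t in
  let k := size cs in
  [seq PNode s (permute p ys)
  | p <- enum {perm 'I_k},
    ys <- all_choices
            ((fix sl (cs : seq (L * ptree S L)) : seq (seq (L * ptree S L)) :=
                match cs with
                | [::] => [::]
                | c :: cs' => [seq (c.1, y) | y <- sym_list c.2] :: sl cs'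
                end) cs)].

End Trees.

Fixpoint shape (S L : Type) (t : ptree S L) : ptree S unit :=
  let: PNode s cs := t in
  PNode s ((fix sh (cs : seq (L * ptree S L)) : seq (unit * ptree S unit) :=
             match cs with
             | [::] => [::]
             | c :: cs' => (tt, shape c.2) :: sh cs'
             end) cs).

Section Labeled.
Variable R : realType.

(* displacement D_{v,vi} of the edge from v to its i-th child (0-indexed) *)
Definition disp (S : Type) (x : ptree S R) (v : seq nat) (i : nat) : R :=
  if subt x v is Some (PNode _ cs) then nth 0 [seq c.1 | c <- cs] i else 0.

Definition clamp01 (y : R) : R := Num.min 1 (Num.max 0 y).

(* Lambda^{(q)}_t : the number of j < i with s(theta(j)) = q at i/(2n-2), *)
(* linearly interpolated on [0,1].                                      *)
Definition Lambda (S : eqType) (L : Type) (q : S) (t : ptree S L) (x : R) : R :=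
  let N := (2 * nverts t - 2)%N in
  \sum_(j < N) ((nth q (contour t) j == q)%:R * clamp01 (x * N%:R - j%:R)).

Definition scaledLambda (S : eqType) (L : Type) (q : S) (t : ptree S L) (x : R) : R :=
  (nverts t)%:R^-1 * Lambda q t x.

(* The generating events: shape = t and D_{v,vi} in B v i for all edges. *)
Definition Eset (S : Type) (t : ptree S unit) (B : seq nat -> nat -> set R)
  : set (ptree S R) :=
  [set y | shape y = t /\
           forall v, v \in vertices t -> forall i, (i < kids t v)%N -> B v i (disp y v i)].

Definition meas_family (B : seq nat -> nat -> set R) :=
  forall v i, measurable (B v i).

(* restrict a rectangle to the child-displacement vector D_v *)
Definition Bonly (v : seq nat) (B : seq nat -> nat -> set R) : seq nat -> nat -> set R :=
  fun u i => if u == v then B v i else setT.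

(* membership in a list, for a type without decidable equality *)
Fixpoint inseq (A : Type) (x : A) (s : seq A) : Prop :=
  if s is y :: s' then y = x \/ inseq x s' else False.

Section RandomTrees.
Context (S : Type) (d : measure_display) (T : measurableType d) (P : probability T R).

Definition pr (A : set T) : R := fine (P A).

Definition shapeEv (X : T -> ptree S R) (t : ptree S unit) : set T :=
  [set w | shape (X w) = t].

Definition random_ltree (X : T -> ptree S R) : Prop :=
  forall t B, meas_family B -> measurable (X @^-1` Eset t B).

Definition cpr (X : T -> ptree S R) (t : ptree S unit) (A : set T) : R :=
  pr A / pr (shapeEv X t).

Definition valid_law (X : T -> ptree S R) : Prop :=
  random_ltree X /\
  (* (i) the law of the unlabeled tree is invariant under every sigma in P_t *)
  (forall (t t' : ptree S unit), inseq t' (sym_list t) ->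
       P (shapeEv X t) = P (shapeEv X t')) /\
  (* (ii) the D_v, v in V(T), are conditionally independent given T *)
  (forall t, 0 < pr (shapeEv X t) -> forall B, meas_family B ->
       cpr X t (X @^-1` Eset t B) =
       \prod_(v <- vertices t) cpr X t (X @^-1` Eset t (Bonly v B))) /\
  (* (iii) the conditional law of D_v given T depends only on s(v) and the
     types of the children of v *)
  (forall t t' v v', 0 < pr (shapeEv X t) -> 0 < pr (shapeEv X t') ->
       v \in vertices t -> v' \in vertices t' ->
       typ t v = typ t' v' -> child_types t v = child_types t' v' ->
       forall B : nat -> set R, (forall i, measurable (B i)) ->
       cpr X t (X @^-1` Eset t (fun u i => if u == v then B i else setT)) =
       cpr X t' (X @^-1` Eset t' (fun u i => if u == v' then B i else setT))).

End RandomTrees.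

(* probability that sigma(x) lies in Eset t' B, sigma uniform on P_x *)
Definition sym_prob (S : Type) (x : ptree S R) (t' : ptree S unit)
    (B : seq nat -> nat -> set R) : R :=
  (\sum_(y <- sym_list x) \1_(Eset t' B) y) / (size (sym_list x))%:R.

(* Y (on (T', P')) has law nu^sym, where nu is the law of X (on (T, P)):  *)
(* P'(Y in A) = E[ P(sigma(X) in A | X) ], sigma uniform on P_X, for all   *)
(* generating events A (which determine the law).                        *)
Definition is_symmetrization (S : Type)
    (d : measure_display) (T : measurableType d) (P : probability T R)
    (X : T -> ptree S R)
    (d' : measure_display) (T' : measurableType d') (P' : probability T' R)
    (Y : T' -> ptree S R) : Prop :=
  random_ltree Y /\
  forall t' B, meas_family B ->
    P' (Y @^-1` Eset t' B) = (\int[P]_w (sym_prob (X w) t' B)%:E)%E.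

Definition C01 (f : R -> R) : Prop :=
  {within [set x : R | 0 <= x <= 1], continuous f}.

Definition C01_bounded (F : (R -> R) -> R) : Prop :=
  exists M : R, forall f, C01 f -> `|F f| <= M.

Definition C01_continuous (F : (R -> R) -> R) : Prop :=
  forall f, C01 f -> forall e : R, 0 < e -> exists2 delta : R, 0 < delta &
    forall g, C01 g -> (forall x, 0 <= x <= 1 -> `|f x - g x| <= delta) ->
      `|F f - F g| < e.

(* a C([0,1],R)-valued random process (Borel measurable for the uniform
   topology; on a metric space the Borel sigma-algebra is generated by the
   bounded continuous functions) *)
Definition C01_process (d : measure_display) (T : measurableType d)
    (L : T -> R -> R) : Prop :=
  (forall w, C01 (L w)) /\
  forall F, C01_bounded F -> C01_continuous F -> measurable_fun setT (F \o L).

Definition cvg_dist (d : nat -> measure_display) (T : forall n, measurableType (d n))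
    (P : forall n, probability (T n) R) (Z : forall n, T n -> R -> R)
    (d0 : measure_display) (T0 : measurableType d0) (P0 : probability T0 R)
    (L : T0 -> R -> R) : Prop :=
  forall F, C01_bounded F -> C01_continuous F ->
    ((fun n => \int[P n]_w (F (Z n w))%:E) @ \oo --> \int[P0]_w (F (L w))%:E)%E.

End Labeled.

(* Lambda^(q)_t only reads the types along the contour and the number of vertices,
   so it depends on the unlabeled tree alone, and it suffices that T_n and T_n^sym
   have the same shape law.  For shapes t, t' let m(t,t') be the number of
   sigma in P_t with sigma(t) = t'.  Since sigma(t) = t' iff sigma^-1(t') = t,
   m is symmetric, and |P_t| = |P_t'| whenever m(t,t') > 0.  With the invariance (i)
   of the shape law this gives the detailed balance
     P(T = t) m(t,t') / |P_t| = P(T = t') m(t',t) / |P_t'|,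
   and summing over t yields P(T^sym = t') = P(T = t').  Shapes form a countable set,
   so equal laws give equal expectations of every function of the shape.  Only
   property (i) of validity is used. *)

From Pilot Require Import Defs.
From HB Require Import structures.
From mathcomp Require Import all_boot all_order all_algebra all_fingroup.
From mathcomp Require Import all_classical all_reals all_analysis.
Import Order.TTheory GRing.Theory Num.Theory numFieldNormedType.Exports.
Set Implicit Arguments. Unset Strict Implicit. Unset Printing Implicit Defensive.
Local Open Scope classical_set_scope.
Local Open Scope ring_scope.

(* [seq.shape] would otherwise shadow the forgetful map of Defs. *)
Local Notation shape := (@Defs.shape _ _).

Section TreeInduction.
Variables (S L : Type) (P : ptree S L -> Prop).
Hypothesis IH : forall s cs, (forall c, inseq c cs -> P c.2) -> P (PNode s cs).

Fixpoint ptree_ind_inseq (t : ptree S L) : P t :=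
  let: PNode s cs := t in
  IH s ((fix children cs : forall c, inseq c cs -> P c.2 :=
    if cs is c' :: cs' then fun c in_c =>
      match in_c with
      | or_introl e => eq_ind c' (fun c => P c.2) (ptree_ind_inseq c'.2) c e
      | or_intror in_cs' => children cs' c in_cs'
      end
    else fun c (in_c : False) => False_ind _ in_c) cs).

End TreeInduction.

Lemma inseq_in (A : eqType) (x : A) s : inseq x s <-> x \in s.
Proof.
elim: s => //= a s IHs; rewrite in_cons; split.
  by case=> [->|/IHs ->]; rewrite ?eqxx ?orbT.
by case/orP=> [/eqP ->|/IHs]; [left|right].
Qed.

Lemma eq_map_inseq (A B : Type) (f g : A -> B) (s : seq A) :
  (forall c, inseq c s -> f c = g c) -> map f s = map g s.
Proof.
elim: s => //= a s IHs fg; rewrite fg; last by left.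
by rewrite IHs // => c s_c; apply: fg; right.
Qed.

Section Unfolding.
Variables (S L : Type).

Lemma shape_PNode s (cs : seq (L * ptree S L)) :
  shape (PNode s cs) = PNode s [seq (tt, shape c.2) | c <- cs].
Proof. by congr PNode; elim: cs => //= c cs ->. Qed.

Lemma contour_PNode s (cs : seq (L * ptree S L)) :
  contour (PNode s cs) = s :: flatten [seq contour c.2 ++ [:: s] | c <- cs].
Proof. by congr cons; elim: cs => //= c cs ->; rewrite -catA. Qed.

Fixpoint child_vertices (A : Type) (vs : A -> seq (seq nat)) (i : nat)
    (cs : seq (L * A)) : seq (seq nat) :=
  if cs is c :: cs' then [seq i :: w | w <- vs c.2] ++ child_vertices vs i.+1 cs'
  else [::].

Lemma vertices_PNode s (cs : seq (L * ptree S L)) :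
  vertices (PNode s cs) = [::] :: child_vertices (@vertices S L) 0 cs.
Proof. by rewrite /=; congr cons; elim: cs 0%N => //= c cs IHcs i; rewrite IHcs. Qed.

End Unfolding.

Section ShapeInvariants.
Variables (S L : Type).

Lemma contour_shape (x : ptree S L) : contour (shape x) = contour x.
Proof.
elim/ptree_ind_inseq: x => s cs IH.
rewrite shape_PNode !contour_PNode -map_comp.
by congr (_ :: flatten _); apply: eq_map_inseq => c /IH /= ->.
Qed.

Lemma vertices_shape (x : ptree S L) : vertices (shape x) = vertices x.
Proof.
elim/ptree_ind_inseq: x => s cs IH.
rewrite shape_PNode !vertices_PNode; congr cons.
elim: cs 0%N IH => //= c cs IHcs i IH.
by rewrite IH /=; [rewrite IHcs // => c' ?; apply: IH; right | left].
Qed.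

Lemma nverts_shape (x : ptree S L) : nverts (shape x) = nverts x.
Proof. by rewrite /nverts vertices_shape. Qed.

End ShapeInvariants.

Lemma scaledLambda_shape (R : realType) (S : eqType) (L : Type) (q : S)
    (x : ptree S L) :
  scaledLambda (R := R) q (shape x) = scaledLambda q x.
Proof.
by apply/funext => y; rewrite /scaledLambda /Lambda nverts_shape contour_shape.
Qed.

Section Permute.
Variables (A : Type) (k : nat).
Implicit Type p : {perm 'I_k}.

Lemma size_permute p (ys : seq A) : size ys = k -> size (permute p ys) = k.
Proof. by case: ys => [|y0 ys] //= _; rewrite size_map size_enum_ord. Qed.

Lemma nth_permute p (ys : seq A) x (i : 'I_k) :
  size ys = k -> nth x (permute p ys) i = nth x ys (p i).
Proof.
case: ys => [ys0|y0 ys ysk]; first by have := ltn_ord i; rewrite -{2}ys0.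
rewrite /= (nth_map i) ?size_enum_ord // nth_ord_enum.
by apply: set_nth_default; rewrite ysk.
Qed.

Lemma permuteK p (ys : seq A) : size ys = k -> permute p^-1 (permute p ys) = ys.
Proof.
case: ys => [//|y0 ys] ysk; apply: (@eq_from_nth _ y0); first by rewrite !size_permute.
move=> i; rewrite !size_permute // => ik.
by rewrite (nth_permute _ _ (Ordinal ik)) ?size_permute // nth_permute // permKV.
Qed.

Lemma map_permute p (B : Type) (f : A -> B) (ys : seq A) :
  permute p (map f ys) = map f (permute p ys).
Proof.
case: ys => [|y0 ys] //=; rewrite -map_comp; apply: eq_map => i /=.
rewrite -[f y0 :: _]/(map f (y0 :: ys)).
have [lt_pi|ge_pi] := ltnP (p i) (size (y0 :: ys)); first exact: nth_map.
by rewrite !nth_default ?size_map.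
Qed.

Lemma permuteKV p (ys : seq A) : size ys = k -> permute p (permute p^-1 ys) = ys.
Proof. by rewrite -{1}(invgK p); apply: permuteK. Qed.

End Permute.

Lemma eq_permute (A : eqType) k (p : {perm 'I_k}) (ys zs : seq A) :
  size ys = k -> (permute p ys == zs) = (size zs == k) && (ys == permute p^-1 zs).
Proof.
move=> ysk; apply/eqP/andP => [<-|[/eqP zsk /eqP ->]]; last by rewrite permuteKV.
by rewrite size_permute // permuteK.
Qed.

Section AllChoices.
Variable A : Type.

Lemma all_choices_cons (l : seq A) (ls : seq (seq A)) :
  all_choices (l :: ls) = [seq x :: r | x <- l, r <- all_choices ls].
Proof. by []. Qed.

Lemma size_all_choices (ls : seq (seq A)) :
  size (all_choices ls) = \prod_(l <- ls) size l.
Proof. by elim: ls => [|l ls IHls]; rewrite ?big_nil ?big_cons //= size_allpairs IHls. Qed.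

Lemma map_all_choices (B : Type) (f : A -> B) (ls : seq (seq A)) :
  map (map f) (all_choices ls) = all_choices (map (map f) ls).
Proof. by elim: ls => //= l ls <-; rewrite map_allpairs allpairs_mapl allpairs_mapr. Qed.

End AllChoices.

Lemma size_mem_all_choices (A : eqType) (ls : seq (seq A)) ys :
  ys \in all_choices ls -> size ys = size ls.
Proof.
elim: ls ys => [|l ls IHls] ys /=; first by rewrite inE => /eqP ->.
by case/allpairsP => -[x r] [_ /IHls <- ->].
Qed.

Lemma count_cons_allpairs (A : eqType) (l : seq A) (rs : seq (seq A)) z zs :
  count_mem (z :: zs) [seq x :: r | x <- l, r <- rs] =
  (count_mem z l * count_mem zs rs)%N.
Proof.
elim: l => // x l IHl; rewrite allpairs_cons count_cat count_map IHl /= mulnDl.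
congr (_ + _); case: eqVneq => [->|xz] /=.
  by rewrite mul1n; apply: eq_count => r; rewrite /= eqseq_cons eqxx.
by rewrite mul0n (@eq_count _ _ pred0) ?count_pred0 // => r; rewrite /= eqseq_cons (negbTE xz).
Qed.

Lemma count_all_choices (A : eqType) (ls : seq (seq A)) (zs : seq A) x0 :
  count_mem zs (all_choices ls) =
  ((size zs == size ls) *
     \prod_(i < size ls) count_mem (nth x0 zs i) (nth [::] ls i))%N.
Proof.
elim: ls zs => [|l ls IHls] [|z zs] //; rewrite ?big_ord0 // all_choices_cons.
  by rewrite mul0n; apply/count_memPn/allpairsP => -[[? ?] [_ _]].
by rewrite count_cons_allpairs IHls eqSS big_ord_recl mulnCA.
Qed.

Definition child_sym_lists (S L : Type) (cs : seq (L * ptree S L)) :=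
  [seq [seq (c.1, y) | y <- sym_list c.2] | c <- cs].

Lemma sym_list_PNode (S L : Type) s (cs : seq (L * ptree S L)) :
  sym_list (PNode s cs) =
  [seq PNode s (permute p ys) | p <- enum {perm 'I_(size cs)},
                                ys <- all_choices (child_sym_lists cs)].
Proof. by rewrite /= /child_sym_lists; do 3 f_equal; elim: cs => //= c cs ->. Qed.

Lemma sym_list_shape (S L : Type) (x : ptree S L) :
  map shape (sym_list x) = sym_list (shape x).
Proof.
elim/ptree_ind_inseq: x => s cs IH.
rewrite shape_PNode !sym_list_PNode map_allpairs size_map.
have -> : child_sym_lists [seq (tt, shape c.2) | c <- cs] =
          map (map (fun c => (tt, shape c.2))) (child_sym_lists cs).
  rewrite /child_sym_lists -!map_comp; apply: eq_map_inseq => c /IH /= <-.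
  by rewrite -!map_comp.
rewrite -map_all_choices allpairs_mapr; apply: eq_allpairs => p ys.
by rewrite shape_PNode map_permute.
Qed.

Section ShapeEncoding.
Variable S : Type.

Fixpoint gtree_of_shape (t : ptree S unit) : GenTree.tree S :=
  let: PNode s cs := t in
  GenTree.Node 0 (GenTree.Leaf s :: [seq let: (_, t') := c in gtree_of_shape t' | c <- cs]).

Fixpoint shape_of_gtree (g : GenTree.tree S) : option (ptree S unit) :=
  if g is GenTree.Node _ (GenTree.Leaf s :: gs) then
    Some (PNode s (pmap (fun g => omap (pair tt) (shape_of_gtree g)) gs))
  else None.

Lemma gtree_of_shapeK : pcancel gtree_of_shape shape_of_gtree.
Proof.
elim/ptree_ind_inseq => s cs IH /=; congr (Some (PNode s _)).
elim: cs IH => //= -[[] t] cs IHcs IH.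
by rewrite (IH (tt, t)) /= ?IHcs //; [move=> c ?; apply: IH; right | left].
Qed.

End ShapeEncoding.

HB.instance Definition _ (S : eqType) :=
  Equality.copy (ptree S unit) (pcan_type (@gtree_of_shapeK S)).
HB.instance Definition _ (S : choiceType) :=
  Choice.copy (ptree S unit) (pcan_type (@gtree_of_shapeK S)).
HB.instance Definition _ (S : countType) :=
  Countable.copy (ptree S unit) (pcan_type (@gtree_of_shapeK S)).

Section SymmetryCounts.
Variable S : eqType.
Implicit Types (t : ptree S unit) (s : S) (cs : seq (unit * ptree S unit)).

Definition sym_count t t' := count_mem t' (sym_list t).
Definition sym_size t := size (sym_list t).

Lemma eq_PNode s s' cs cs' : (PNode s cs == PNode s' cs') = (s == s') && (cs == cs').
Proof. by apply/eqP/andP => [[-> ->]|[/eqP-> /eqP->]]. Qed.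

Lemma count_pair_unit (u : unit) (ts : seq (ptree S unit)) (c : unit * ptree S unit) :
  count_mem c [seq (u, t) | t <- ts] = count_mem c.2 ts.
Proof. by rewrite count_map; apply: eq_count => t; case: c u => [[] ?] []. Qed.

Lemma sym_count_PNode s cs s' cs' k (c0 : unit * ptree S unit) : size cs = k ->
  sym_count (PNode s cs) (PNode s' cs') =
  ((s == s') * (size cs' == k) *
    \sum_(p : {perm 'I_k}) \prod_(i < k) sym_count (nth c0 cs i).2 (nth c0 cs' ((p^-1)%g i)).2)%N.
Proof.
move=> <-; rewrite /sym_count sym_list_PNode count_flatten -map_comp.
rewrite sumnE big_map big_enum /= big_distrr /=; apply: eq_bigr => p _.
rewrite count_map (@eq_in_count _ _
  (fun ys => (s == s') && ((size cs' == size cs) && (ys == permute p^-1 cs')))); last first.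
  by move=> ys /size_mem_all_choices; rewrite size_map => ysE /=; rewrite eq_PNode eq_permute.
case: (s == s'); rewrite ?mul0n ?count_pred0 //.
have [cs'E|cs'N] := eqVneq (size cs') (size cs); last first.
  by rewrite muln0 (@eq_count _ _ pred0) ?count_pred0.
rewrite !mul1n (count_all_choices _ _ c0) size_map size_permute // eqxx mul1n.
by apply: eq_bigr => i _; rewrite nth_permute // (nth_map c0) // count_pair_unit.
Qed.

Lemma sym_countC t t' : sym_count t t' = sym_count t' t.
Proof.
elim/ptree_ind_inseq: t t' => s cs IH [s' cs'].
pose c0 : unit * ptree S unit := (tt, PNode s [::]).
rewrite (sym_count_PNode _ _ _ c0 erefl).
have [cs'E|cs'N] := eqVneq (size cs') (size cs); last first.
  by rewrite (sym_count_PNode _ _ _ c0 erefl) [size cs == _]eq_sym (negbTE cs'N) !muln0.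
rewrite (sym_count_PNode _ _ _ c0 cs'E) eqxx eq_sym; congr (_ * _)%N.
rewrite (reindex_inj invg_inj) /=; apply: eq_bigr => p _.
rewrite (reindex_inj (@perm_inj _ (p^-1)%g)) /=; apply: eq_bigr => i _.
by rewrite invgK permKV IH //; apply/inseq_in; apply: mem_nth.
Qed.

Lemma sym_size_PNode s cs k (c0 : unit * ptree S unit) : size cs = k ->
  sym_size (PNode s cs) = (k`! * \prod_(i < k) sym_size (nth c0 cs i).2)%N.
Proof.
move=> <-; rewrite /sym_size sym_list_PNode size_allpairs size_all_choices.
rewrite -cardE card_Sn big_map (big_nth c0) big_mkord.
by congr (_ * _)%N; apply: eq_bigr => i _; rewrite size_map.
Qed.

Lemma sym_size_gt0 t : (0 < sym_size t)%N.
Proof.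
elim/ptree_ind_inseq: t => s cs IH.
rewrite (sym_size_PNode _ (tt, PNode s [::]) erefl) muln_gt0 fact_gt0 prodn_gt0 // => i.
by apply: IH; apply/inseq_in; apply: mem_nth.
Qed.

Lemma sym_size_eq t t' : (0 < sym_count t t')%N -> sym_size t = sym_size t'.
Proof.
elim/ptree_ind_inseq: t t' => s cs IH [s' cs'].
pose c0 : unit * ptree S unit := (tt, PNode s [::]).
rewrite (sym_count_PNode _ _ _ c0 erefl).
case: (s == s'); rewrite ?mul0n // mul1n.
have [cs'E|] := eqVneq (size cs') (size cs); rewrite ?mul0n // mul1n.
rewrite lt0n sum_nat_eq0 => /forallPn[p]; rewrite -lt0n => /= /gt0_prodn count_gt0.
rewrite (sym_size_PNode _ c0 erefl) (sym_size_PNode _ c0 cs'E); congr (_ * _)%N.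
rewrite [RHS](reindex_inj (@perm_inj _ (p^-1)%g)) /=; apply: eq_bigr => i _.
by apply: IH; [apply/inseq_in; apply: mem_nth | exact: count_gt0].
Qed.

End SymmetryCounts.

Lemma pickle_fibreE (A : countType) n :
  [set a : A | pickle a = n] = oapp (fun a => [set a]) set0 (pickle_inv n).
Proof.
apply/seteqP; split => [a <-|a]; first by rewrite pickleK_inv.
by have := @pickle_invK A n; case: (pickle_inv n) => //= b <- ->.
Qed.

Lemma nneseries_delta (R : realType) m :
  (\sum_(n <oo) ((m == n)%:R)%:E = 1 :> \bar R)%E.
Proof.
rewrite (nneseries_split _ m.+1) // add0n eseries0 ?adde0; last first.
  by move=> n /ltn_eqF ->.
rewrite big_nat_recr //= eqxx big1_seq ?add0e // => n.
by rewrite mem_index_iota => /and3P[_ _ /gtn_eqF ->].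
Qed.

Lemma nneseries_count_pickle (R : realType) (A : countType) (s : seq A) :
  (\sum_(n <oo) ((count (fun a => pickle a == n) s)%:R)%:E = (size s)%:R%:E :> \bar R)%E.
Proof.
elim: s => [|a s IHs] /=; first by rewrite eseries0.
under eq_eseriesr do rewrite natrD EFinD.
by rewrite nneseriesD // nneseries_delta IHs -EFinD -natr1 addrC.
Qed.

Section CountablyValued.
Context (R : realType) (A : countType) (d : measure_display) (T : measurableType d).
Context (mu : {measure set T -> \bar R}) (f : T -> A).
Hypothesis measurable_fibre : forall a, measurable (f @^-1` [set a]).

Lemma measurable_preimage_countable (B : set A) : measurable (f @^-1` B).
Proof.
rewrite (_ : f @^-1` B = \bigcup_a (if pselect (B a) then f @^-1` [set a] else set0)).
  apply: countable_bigcupT_measurable => [|a]; first exact: countableP.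
  by case: (pselect (B a)) => ?; [apply: measurable_fibre | apply: measurable0].
apply/seteqP; split => [w Bfw|w [a _]]; first by exists (f w) => //; case: (pselect (B (f w))).
by case: (pselect (B a)) => // Ba /= ->.
Qed.

Lemma ge0_integral_countably_valued (g : A -> \bar R) : (forall a, 0 <= g a)%E ->
  (\int[mu]_w g (f w) =
   \sum_(n <oo) oapp (fun a => g a * mu (f @^-1` [set a])) 0 (pickle_inv n))%E.
Proof.
move=> g_ge0.
have cover : [set: T] = \bigcup_n f @^-1` [set a | pickle a = n].
  by apply/seteqP; split => // w _; exists (pickle (f w)).
rewrite cover ge0_integral_bigcup //=.
- apply: eq_eseriesr => n _; rewrite pickle_fibreE.
  case: (pickle_inv n) => [a|] /=; last by rewrite preimage_set0 integral_set0.
  by rewrite -integral_cst //; apply: eq_integral => w; rewrite inE => <-.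
- by move=> n; apply: measurable_preimage_countable.
- by rewrite -cover => _ B _; rewrite setTI; apply: (measurable_preimage_countable (g @^-1` B)).
- by move=> i j _ _ [w [/= <- <-]].
Qed.

End CountablyValued.

Lemma eq_integral_countably_valued (R : realType) (A : countType)
    (d1 : measure_display) (T1 : measurableType d1) (mu1 : {measure set T1 -> \bar R})
    (f1 : T1 -> A)
    (d2 : measure_display) (T2 : measurableType d2) (mu2 : {measure set T2 -> \bar R})
    (f2 : T2 -> A) :
  (forall a, measurable (f1 @^-1` [set a])) -> (forall a, measurable (f2 @^-1` [set a])) ->
  (forall a, mu1 (f1 @^-1` [set a]) = mu2 (f2 @^-1` [set a])) ->
  forall g : A -> \bar R, (\int[mu1]_w g (f1 w) = \int[mu2]_w g (f2 w))%E.
Proof.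
move=> mf1 mf2 law g.
have ge0_eq (h : A -> \bar R) : (forall a, 0 <= h a)%E ->
    (\int[mu1]_w h (f1 w) = \int[mu2]_w h (f2 w))%E.
  move=> h_ge0; rewrite !ge0_integral_countably_valued //.
  by apply: eq_eseriesr => n _; case: (pickle_inv n) => //= a; rewrite law.
rewrite integralE [RHS]integralE.
rewrite (funepos_comp g f1) (funeneg_comp g f1) (funepos_comp g f2) (funeneg_comp g f2).
by rewrite !ge0_eq.
Qed.

Lemma Eset_setT (R : realType) (S : Type) (t : ptree S unit) :
  Eset t (fun _ _ => @setT R) = [set y | shape y = t].
Proof. by apply/seteqP; split => y; rewrite /Eset /=; [case | move=> ->; split]. Qed.

Lemma measurable_shapeEv (R : realType) (S : Type) (d : measure_display)
    (T : measurableType d) (X : T -> ptree S R) t :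
  random_ltree X -> measurable (shapeEv X t).
Proof. by move=> /(_ t (fun _ _ => setT)); rewrite Eset_setT; apply=> v i; apply: measurableT. Qed.

Lemma sym_prob_setT (R : realType) (S : eqType) (x : ptree S R) t' :
  sym_prob x t' (fun _ _ => setT) =
  (sym_count (shape x) t')%:R / (sym_size (shape x))%:R.
Proof.
rewrite /sym_prob /sym_count /sym_size -sym_list_shape count_map size_map Eset_setT.
congr (_ / _); elim: (sym_list x) => [|y s IHs]; rewrite ?big_nil ?big_cons //= IHs.
by rewrite natrD indicE; case: eqP => [shy|nshy]; [rewrite mem_set | rewrite memNset].
Qed.

Section ShapeLaw.
Context (R : realType) (S : countType).
Context (d : measure_display) (T : measurableType d) (P : probability T R).
Context (X : T -> ptree S R).
Context (d' : measure_display) (T' : measurableType d') (P' : probability T' R).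
Context (Y : T' -> ptree S R).
Hypotheses (X_valid : valid_law P X) (Y_sym : is_symmetrization P X P' Y).

Lemma shape_law_balance t t' :
  (((sym_count t t')%:R / (sym_size t)%:R)%:E * P (shapeEv X t) =
   ((sym_count t' t)%:R / (sym_size t')%:R)%:E * P (shapeEv X t'))%E.
Proof.
rewrite sym_countC; have [->|pos] := posnP (sym_count t' t); first by rewrite !mul0r !mul0e.
rewrite (sym_size_eq pos); congr (_ * _)%E; symmetry.
by apply: X_valid.2.1; apply/inseq_in; rewrite -has_pred1 has_count.
Qed.

Lemma shape_law_symmetrization t' : P' (shapeEv Y t') = P (shapeEv X t').
Proof.
case: Y_sym => _ Y_law.
have -> : shapeEv Y t' = Y @^-1` Eset t' (fun _ _ => setT) by rewrite Eset_setT.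
rewrite Y_law; last by move=> *; apply: measurableT.
under eq_integral do rewrite sym_prob_setT.
have shape_fibre t : measurable ((fun w => shape (X w)) @^-1` [set t]).
  exact: measurable_shapeEv X_valid.1.
rewrite (ge0_integral_countably_valued P shape_fibre
  (g := fun t => ((sym_count t t')%:R / (sym_size t)%:R)%:E)); last first.
  by move=> t; rewrite lee_fin divr_ge0.
(* By detailed balance, the n-th term is P(T = t') times the proportion of P_t'
   mapping t' to the shape with code n; these proportions sum to 1. *)
set pt := P (shapeEv X t').
have ptE : pt = (fine pt)%:E by rewrite fineK // fin_num_measure //; apply: shape_fibre.
rewrite (eq_eseriesr (g := fun n =>
   ((fine pt / (sym_size t')%:R)%:E * ((count (fun y => pickle y == n) (sym_list t'))%:R)%:E)%E)).
  rewrite nneseriesZl // nneseries_count_pickle -EFinM ptE -mulrA mulVf ?mulr1 //.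
  by rewrite pnatr_eq0 -lt0n sym_size_gt0.
move=> n _; case E: (pickle_inv n) => [t|] /=.
  have <- : pickle t = n by have := @pickle_invK (ptree S unit) n; rewrite E.
  rewrite shape_law_balance -/pt ptE -EFinM; congr EFin.
  rewrite (@eq_count _ _ (pred1 t)); last by move=> y; rewrite /= (inj_eq (pcan_inj pickleK)).
  by rewrite /sym_count mulrC mulrA mulrAC.
rewrite (@eq_count _ _ pred0) ?count_pred0 ?mule0 // => y.
by apply/eqP => ny; move: E; rewrite -ny pickleK_inv.
Qed.

End ShapeLaw.

Unset Implicit Arguments.

Theorem proposition3p6 (R : realType) (S : countType) (q : S)
    (dT : nat -> measure_display) (OT : forall n, measurableType (dT n))
    (PT : forall n, probability (OT n) R) (X : forall n, OT n -> ptree S R)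
    (dY : nat -> measure_display) (OY : forall n, measurableType (dY n))
    (PY : forall n, probability (OY n) R) (Y : forall n, OY n -> ptree S R)
    (d0 : measure_display) (O0 : measurableType d0) (P0 : probability O0 R)
    (Lam : O0 -> R -> R) :
  (forall n, valid_law (PT n) (X n)) ->
  (forall n, is_symmetrization (PT n) (X n) (PY n) (Y n)) ->
  C01_process Lam ->
  cvg_dist PY (fun n w => scaledLambda q (Y n w)) P0 Lam ->
  cvg_dist PT (fun n w => scaledLambda q (X n w)) P0 Lam.
Proof.
move=> X_valid Y_sym _ Y_cvg F F_bounded F_cont.
suff -> : (fun n => \int[PT n]_w (F (scaledLambda q (X n w)))%:E)%E =
          (fun n => \int[PY n]_w (F (scaledLambda q (Y n w)))%:E)%E.
  exact: Y_cvg.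
apply/funext => n.
under eq_integral do rewrite -scaledLambda_shape.
under [RHS]eq_integral do rewrite -scaledLambda_shape.
apply: (eq_integral_countably_valued _ _ _ (fun t => (F (scaledLambda q t))%:E)) => t.
- exact: measurable_shapeEv (X_valid n).1.
- exact: measurable_shapeEv (Y_sym n).1.
- exact/esym/(shape_law_symmetrization (X_valid n) (Y_sym n)).
Qed.
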